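(* Let $n\ge2$ be an integer and let $\mathfrak{R}$ be a unital alternative ring which is $2$-, $3$-, $(n-1)$- and $(n-3)$-torsion free, with a nontrivial idempotent $e_1$, $e_2=1-e_1$, and Peirce decomposition $\mathfrak{R}=\mathfrak{R}_{11}\oplus\mathfrak{R}_{12}\oplus\mathfrak{R}_{21}\oplus\mathfrak{R}_{22}$, satisfying: (1) if $i\ne j$, $x_{ij}\in\mathfrak{R}_{ij}$ and $x_{ij}\mathfrak{R}_{ji}=0$, then $x_{ij}=0$; (2) if $x_{11}\in\mathfrak{R}_{11}$ and $x_{11}\mathfrak{R}_{12}=0$ or $\mathfrak{R}_{21}x_{11}=0$, then $x_{11}=0$; (3) if $x_{22}\in\mathfrak{R}_{22}$ and $\mathfrak{R}_{12}x_{22}=0$ or $x_{22}\mathfrak{R}_{21}=0$, then $x_{22}=0$; (4) if $z\in\mathcal{Z}(\mathfrak{R})$, $z\ne0$, then $z\mathfrak{R}=\mathfrak{R}$. Let $\mathcal{D}\colon\mathfrak{R}\to\mathfrak{R}$ be a multiplicative Lie $n$-derivation satisfying (a) $e_2\mathcal{D}(\mathfrak{R}_{11})e_2\subseteq\mathcal{Z}(\mathfrak{R})e_2$, (b) $e_1\mathcal{D}(\mathfrak{R}_{22})e_1\subseteq\mathcal{Z}(\mathfrak{R})e_1$, (c) $\mathcal{D}(\mathfrak{R}_{ij})\subseteq\mathfrak{R}_{ij}$ for $i\ne j$. Put $y=e_1\mathcal{D}(e_1)e_2+e_2\mathcal{D}(e_1)e_1$, $z=e_1$, and $f_{y,z}=[L_y,L_z]+[L_y,R_z]+[R_y,R_z]$.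 Then $\mathcal{D}(e_1)-f_{y,z}(e_1)\in\mathcal{Z}(\mathfrak{R})$.
   Context: $\mathfrak{R}$ is alternative if $(x,x,y)=0=(y,x,x)$ for all $x,y$, where $(x,y,z)=(xy)z-x(yz)$ (not necessarily associative). $k$-torsion free: $kx=0\Rightarrow x=0$. $[x,y]=xy-yx$; $\mathcal{Z}(\mathfrak{R})=\{r:[r,x]=0\ \forall x\}$; $\mathcal{Z}(\mathfrak{R})e_i=\{ze_i:z\in\mathcal{Z}(\mathfrak{R})\}$. $p_1(x)=x$, $p_n(x_1,\dots,x_n)=[p_{n-1}(x_1,\dots,x_{n-1}),x_n]$; a (not necessarily additive) map $\mathcal{D}$ is a multiplicative Lie $n$-derivation if $\mathcal{D}(p_n(x_1,\dots,x_n))=\sum_{i=1}^n p_n(x_1,\dots,\mathcal{D}(x_i),\dots,x_n)$ for all $x_i$. $\mathfrak{R}_{ij}=e_i\mathfrak{R}e_j$. $L_y(x)=yx$, $R_y(x)=xy$ are the left and right multiplication operators, and $[S,T]=S\circ T-T\circ S$ for operators $S,T$ on $\mathfrak{R}$. *)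

From HB Require Import structures.
From mathcomp Require Import all_boot all_order all_algebra.
Set Implicit Arguments. Unset Strict Implicit. Unset Printing Implicit Defensive.
Import GRing.Theory.
Local Open Scope ring_scope.

Record alt_ring (R : zmodType) := AltRing {
  amul : R -> R -> R;
  aone : R;
  amulDl : forall x y z, amul (x + y) z = amul x z + amul y z;
  amulDr : forall x y z, amul x (y + z) = amul x y + amul x z;
  amul1l : forall x, amul aone x = x;
  amul1r : forall x, amul x aone = x;
  aleft_alt : forall x y, amul (amul x x) y = amul x (amul x y);
  aright_alt : forall x y, amul (amul y x) x = amul y (amul x x)
}.

Section Defs.
Variables (R : zmodType) (A : alt_ring R).
Local Notation m := (amul A).

Definition assoc (x y z : R) : R := m (m x y) z - m x (m y z).

Definition comm (x y : R) : R := m x y - m y x.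

Definition torsion_free (k : int) : Prop :=
  k != 0 -> forall x : R, x *~ k = 0 -> x = 0.

Definition central (r : R) : Prop := forall x, comm r x = 0.

Definition in_Ze (e w : R) : Prop := exists z, central z /\ w = m z e.

Definition peirce (ei ej x : R) : Prop := exists r, x = m (m ei r) ej.

(* p_1(x_0) = x_0, p_{k+1}(x_0..x_k) = [p_k(x_0..x_{k-1}), x_k];
   lie_p k x = p_{k+1}(x 0, ..., x k) *)
Fixpoint lie_p (k : nat) (x : nat -> R) : R :=
  match k with
  | 0 => x 0%N
  | k'.+1 => comm (lie_p k' x) (x k)
  end.

Definition lie_n_derivation (n : nat) (D : R -> R) : Prop :=
  forall x : nat -> R,
    D (lie_p n.-1 x) =
    \sum_(i < n) lie_p n.-1 (fun j => if j == nat_of_ord i then D (x j) else x j).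

Definition Lop (y : R) : R -> R := fun x => m y x.
Definition Rop (y : R) : R -> R := fun x => m x y.
Definition op_comm (S T : R -> R) : R -> R := fun x => S (T x) - T (S x).

Definition f_yz (y z : R) : R -> R := fun x =>
  op_comm (Lop y) (Lop z) x + op_comm (Lop y) (Rop z) x + op_comm (Rop y) (Rop z) x.

End Defs.

From HB Require Import structures.
From mathcomp Require Import all_boot all_order all_algebra.
From mathcomp Require Import zify.
Import GRing.Theory.
Local Open Scope ring_scope.
Set Implicit Arguments. Unset Strict Implicit. Unset Printing Implicit Defensive.

(* Write d = D(e1), d_ij = e_i d e_j and e = e1.  By (a), d22 = z e2 with z
   central; in a 3-torsion free alternative ring central elements lie in the
   nucleus, so z can be moved freely through products.  For r in R12 apply D
   to p_n(r, e, ..., e) or p_n(e, r, e, ..., e), whichever equals r, and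
   project onto R12: each of the n - 1 terms containing D(e) contributes
   -e1 [r, d] e2 = d11 r - r d22, so (n-1)-torsion freeness gives
   d11 r = r d22 = z r.  Then (d11 - z e1) R12 = 0, hence d11 = z e1 by (2),
   and D(e1) - f_{y,z}(e1) = d - (d12 + d21) = d11 + d22 = z. *)

Section AlternativeRing.
Variables (R : zmodType) (A : alt_ring R).
Local Notation m := (amul A).

Lemma Lop_zmod_morphism a : zmod_morphism (Lop A a).
Proof. by move=> x y; apply: (addIr (m a y)); rewrite /Lop -amulDr !subrK. Qed.
HB.instance Definition _ a :=
  GRing.isZmodMorphism.Build R R (Lop A a) (Lop_zmod_morphism a).

Lemma Rop_zmod_morphism b : zmod_morphism (Rop A b).
Proof. by move=> x y; apply: (addIr (m y b)); rewrite /Rop -amulDl !subrK. Qed.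
HB.instance Definition _ b :=
  GRing.isZmodMorphism.Build R R (Rop A b) (Rop_zmod_morphism b).

Lemma amul0l b : m 0 b = 0. Proof. exact: raddf0 (Rop A b). Qed.
Lemma amul0r a : m a 0 = 0. Proof. exact: raddf0 (Lop A a). Qed.
Lemma amulBl x y b : m (x - y) b = m x b - m y b. Proof. exact: raddfB (Rop A b) x y. Qed.
Lemma amulBr a x y : m a (x - y) = m a x - m a y. Proof. exact: raddfB (Lop A a) x y. Qed.
Lemma amulMzl x b k : m (x *~ k) b = m x b *~ k. Proof. exact: raddfMz (Rop A b) k x. Qed.
Lemma amulMzr a x k : m a (x *~ k) = m a x *~ k. Proof. exact: raddfMz (Lop A a) k x. Qed.

Lemma commMzl x y k : comm A (x *~ k) y = comm A x y *~ k.
Proof. by rewrite /comm amulMzl amulMzr mulrzBl. Qed.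

Lemma assoc_swap12 a b c : assoc A a b c = - assoc A b a c.
Proof.
have := aleft_alt A (a + b) c.
rewrite !(amulDl, amulDr) !aleft_alt -!addrA => /addrI; rewrite !addrA => /addIr.
by rewrite /assoc => E; apply/eqP; rewrite -addr_eq0 addrACA E -opprD subrr.
Qed.

Lemma assoc_swap23 a b c : assoc A a b c = - assoc A a c b.
Proof.
have := aright_alt A (b + c) a.
rewrite !(amulDl, amulDr) !aright_alt -!addrA => /addrI; rewrite !addrA => /addIr.
by rewrite /assoc => E; apply/eqP; rewrite -addr_eq0 addrACA [m (m a b) c + _]addrC E -opprD subrr.
Qed.

Lemma comm_anti x y : comm A x y = - comm A y x.
Proof. by rewrite /comm opprB. Qed.

Section Central.
Variable z : R.
Hypotheses (tf3 : torsion_free R 3) (z_central : central A z).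

Lemma central_mulC a : m z a = m a z.
Proof. by apply/eqP; rewrite -subr_eq0; apply/eqP; apply: z_central. Qed.

(* [(a,b,z) + (z,a,b) = (a,z,b)] as [z] commutes with everything, while the
   alternative laws turn this into [2 (a,b,z) = - (a,b,z)]. *)
Lemma assoc_central_r a b : assoc A a b z = 0.
Proof.
have E : assoc A a b z + assoc A z a b = assoc A a z b.
  by rewrite /assoc !central_mulC addrC addrA subrK.
rewrite [assoc A z a b]assoc_swap12 [assoc A a z b]assoc_swap23 opprK in E.
by apply: tf3 => //; rewrite -pmulrn mulrS mulr2n E addrN.
Qed.

Lemma central_mulAm a b : m (m a z) b = m a (m z b).
Proof.
apply/eqP; rewrite -subr_eq0 -/(assoc A a z b).
by rewrite assoc_swap23 assoc_central_r oppr0.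
Qed.

Lemma central_mulAl a b : m (m z a) b = m z (m a b).
Proof.
apply/eqP; rewrite -subr_eq0 -/(assoc A z a b).
by rewrite assoc_swap12 assoc_swap23 assoc_central_r !oppr0.
Qed.
End Central.

Section Peirce.
Variable e : R.
Hypothesis e_idem : m e e = e.
Local Notation f := (aone A - e).

Lemma amul_idem_l a : m e (m e a) = m e a.
Proof. by rewrite -aleft_alt e_idem. Qed.

Lemma amul_idem_r a : m (m a e) e = m a e.
Proof. by rewrite aright_alt e_idem. Qed.

Lemma amul_idem_flex a : m e (m a e) = m (m e a) e.
Proof.
apply/esym/eqP; rewrite -subr_eq0 -/(assoc A e a e) assoc_swap12.
by rewrite /assoc aright_alt subrr oppr0.
Qed.

Lemma amul_idem_compl_mid a : m e (m a f) = m (m e a) f.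
Proof. by rewrite !amulBr !amul1r amul_idem_flex. Qed.

Lemma amul_idem_compl_l a : m e (m f a) = 0.
Proof. by rewrite amulBl amul1l amulBr amul_idem_l subrr. Qed.

Lemma amul_compl_idem_r a : m (m a f) e = 0.
Proof. by rewrite amulBr amul1r amulBl amul_idem_r subrr. Qed.

Lemma amul_idem_compl_r a : m (m a e) f = 0.
Proof. by rewrite amulBr amul1r amul_idem_r subrr. Qed.

Lemma peirce_decomp d : d = m (m e d) e + m (m e d) f + (m (m f d) e + m (m f d) f).
Proof. by rewrite -!amulDr !subrKC !amul1r -amulDl subrKC amul1l. Qed.

(* The Peirce spaces R_11, R_12, R_21, R_22 are the joint eigenspaces of
   [L_e] and [R_e] for the eigenvalue pairs (1,1), (1,0), (0,1), (0,0). *)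
Definition eigen x (a b : int) := m e x = x *~ a /\ m x e = x *~ b.

Lemma eigen11 r : eigen (m (m e r) e) 1 1.
Proof. by rewrite /eigen !mulr1z amul_idem_flex amul_idem_l amul_idem_r. Qed.

Lemma eigen12 r : eigen (m (m e r) f) 1 0.
Proof. by rewrite /eigen mulr1z mulr0z amul_idem_compl_mid amul_idem_l amul_compl_idem_r. Qed.

Lemma eigen21 r : eigen (m (m f r) e) 0 1.
Proof. by rewrite /eigen mulr1z mulr0z amul_idem_flex amul_idem_compl_l amul0l amul_idem_r. Qed.

Lemma eigen22 r : eigen (m (m f r) f) 0 0.
Proof. by rewrite /eigen mulr0z amul_idem_compl_mid amul_idem_compl_l amul0l amul_compl_idem_r. Qed.

Lemma eigen12_peirce r : eigen r 1 0 -> peirce A e f r.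
Proof.
by move=> [er re]; exists r; rewrite -amul_idem_compl_mid amulBr amul1r re mulr0z subr0 er mulr1z.
Qed.

Lemma eigen_mul x y a b c d : eigen x a b -> eigen y c d ->
  eigen (m x y) (a - c + b) (d + c - b).
Proof.
move=> [ex xe] [ey ye]; split.
- have := assoc_swap12 e x y; rewrite /assoc ex xe ey !amulMzl !amulMzr.
  move/eqP; rewrite -addr_eq0 addrAC subr_eq0 => /eqP <-.
  by rewrite addrA mulrzDr mulrzBr addrAC.
- have := assoc_swap23 x y e; rewrite /assoc xe ye ey !amulMzl !amulMzr.
  move/eqP; rewrite -addr_eq0 addrAC subr_eq0 => /eqP E.
  apply: (addIr (m x y *~ b - m x y *~ c)); rewrite E.
  by rewrite mulrzBr mulrzDr addrA subrK addrK.
Qed.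

Definition proj12 x := m (m e x) f.

Lemma proj12_zmod_morphism : zmod_morphism proj12.
Proof. by move=> x y; rewrite /proj12 [m e (x - y)]amulBr amulBl. Qed.
HB.instance Definition _ :=
  GRing.isZmodMorphism.Build R R proj12 proj12_zmod_morphism.

Lemma proj12_eigen x a b : eigen x a b -> proj12 x = x *~ a - x *~ b *~ a.
Proof. by move=> [ex xe]; rewrite /proj12 amulBr amul1r ex amulMzl xe. Qed.

Lemma proj12_eigen12 x : eigen x 1 0 -> proj12 x = x.
Proof. by move/proj12_eigen->; rewrite mulr1z mulr0z subr0. Qed.

Lemma proj12_eigen0l x b : eigen x 0 b -> proj12 x = 0.
Proof. by move/proj12_eigen->; rewrite !mulr0z subr0. Qed.

Lemma proj12_eigen1r x a : eigen x a 1 -> proj12 x = 0.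
Proof. by move/proj12_eigen->; rewrite mulr1z subrr. Qed.

Lemma proj12_mul12l x d : eigen x 1 0 -> proj12 (m x d) = m x (m (m f d) f).
Proof.
move=> ex; rewrite {1}(peirce_decomp d).
set d11 := m (m e d) e; set d12 := m (m e d) f.
set d21 := m (m f d) e; set d22 := m (m f d) f.
rewrite !amulDr !raddfD /=.
rewrite (proj12_eigen0l (eigen_mul ex (eigen11 d) : eigen _ 0 2)).
rewrite (proj12_eigen0l (eigen_mul ex (eigen12 d) : eigen _ 0 1)).
rewrite (proj12_eigen1r (eigen_mul ex (eigen21 d) : eigen _ 1 1)).
by rewrite (proj12_eigen12 (eigen_mul ex (eigen22 d))) !add0r.
Qed.

Lemma proj12_mul12r x d : eigen x 1 0 -> proj12 (m d x) = m (m (m e d) e) x.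
Proof.
move=> ex; rewrite {1}(peirce_decomp d).
set d11 := m (m e d) e; set d12 := m (m e d) f.
set d21 := m (m f d) e; set d22 := m (m f d) f.
rewrite !amulDl !raddfD /=.
rewrite (proj12_eigen12 (eigen_mul (eigen11 d) ex)).
rewrite (proj12_eigen0l (eigen_mul (eigen12 d) ex : eigen _ 0 1)).
rewrite (proj12_eigen0l (eigen_mul (eigen21 d) ex : eigen _ 0 0)).
by rewrite (proj12_eigen1r (eigen_mul (eigen22 d) ex : eigen _ (-1) 1)) !addr0.
Qed.

Lemma proj12_comm12 x d : eigen x 1 0 ->
  proj12 (comm A x d) = m x (m (m f d) f) - m (m (m e d) e) x.
Proof. by move=> ex; rewrite raddfB /= proj12_mul12l // proj12_mul12r. Qed.

Lemma comm12_idem x : eigen x 1 0 -> comm A x e = - x.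
Proof. by move=> [ex xe]; rewrite /comm ex xe mulr1z mulr0z sub0r. Qed.

Lemma comm_idem12 x : eigen x 1 0 -> comm A e x = x.
Proof. by move=> [ex xe]; rewrite /comm ex xe mulr1z mulr0z subr0. Qed.

Lemma iter_comm_idem12 k x : eigen x 1 0 -> iter k (comm A ^~ e) x = x *~ (-1) ^+ k.
Proof.
move=> ex; elim: k => [|k /= ->]; first by rewrite expr0 mulr1z.
by rewrite commMzl comm12_idem // exprS mulN1r mulrNz mulNrz.
Qed.

Lemma proj12_comm_idem v : proj12 (comm A v e) = - proj12 v.
Proof.
by rewrite raddfB /= /proj12 amul_idem_flex amul_idem_compl_r amul_idem_l sub0r.
Qed.

Lemma proj12_iter_comm_idem k v :
  proj12 (iter k (comm A ^~ e) v) = proj12 v *~ (-1) ^+ k.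
Proof.
elim: k => [|k /= IH]; first by rewrite expr0 mulr1z.
by rewrite proj12_comm_idem IH exprS mulN1r mulrNz.
Qed.

Lemma lie_p_ext k t t' : (forall j, (j <= k)%N -> t j = t' j) ->
  lie_p A k t = lie_p A k t'.
Proof.
elim: k => [|k IH] tt' /=; first exact: tt'.
by rewrite IH ?tt' // => j jk; rewrite tt' // (leq_trans jk).
Qed.

Lemma lie_p_tail k d t : (forall j, (k < j)%N -> t j = e) ->
  lie_p A (k + d) t = iter d (comm A ^~ e) (lie_p A k t).
Proof.
move=> te; elim: d => [|d /= <-]; first by rewrite addn0.
by rewrite addnS /= te // ltnS leq_addr.
Qed.

Definition spike (q : nat) (r : R) (j : nat) : R := if j == q then r else e.

Lemma spike_tail q r j : (q < j)%N -> spike q r j = e.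
Proof. by move=> qj; rewrite /spike gtn_eqF. Qed.

Lemma lie_p_spike k q r : (q <= 1)%N -> (q <= k)%N -> eigen r 1 0 ->
  lie_p A k (spike q r) = r *~ (-1) ^+ (k - q).
Proof.
move=> q_le1 q_lek er.
have lie_q : lie_p A q (spike q r) = r.
  by case: q q_le1 {q_lek} => [|[|]] //= _; rewrite /spike /= comm_idem12.
rewrite -(subnKC q_lek) lie_p_tail => [|j]; last exact: spike_tail.
by rewrite lie_q iter_comm_idem12 // addKn.
Qed.

Section LieTerms.
Variables (D : R -> R) (k q : nat) (r : R).
Hypotheses (q_le1 : (q <= 1)%N) (q_lek : (q <= k)%N) (even_kq : ~~ odd (k - q)).
Hypotheses (r12 : eigen r 1 0) (Dr12 : eigen (D r) 1 0).

Lemma lie_p_spike_even x : eigen x 1 0 -> lie_p A k (spike q x) = x.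
Proof. by move=> ex; rewrite lie_p_spike // -signr_odd (negbTE even_kq) mulr1z. Qed.

Lemma proj12_lie_term i : (i <= k)%N ->
  proj12 (lie_p A k (fun j => if j == i then D (spike q r j) else spike q r j))
  = if i == q then D r else - proj12 (comm A r (D e)).
Proof.
move=> i_lek; case: (ltngtP i q) => [i_lt_q | q_lt_i | ->].
- have i0 : i = 0%N by lia.
  have q1 : q = 1%N by lia.
  have k_ge1 : (1 <= k)%N by lia.
  rewrite i0 q1 /= -(subnKC k_ge1) lie_p_tail => [|j j_gt1]; last first.
    by rewrite /spike !gtn_eqF // ltnW.
  have even_k1 : ~~ odd (k - 1) by rewrite -q1.
  rewrite proj12_iter_comm_idem -signr_odd (negbTE even_k1) mulr1z.
  by rewrite [comm A r _]comm_anti raddfN /= opprK.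
- case: i i_lek q_lt_i => [|i] // i_lek q_le_i.
  rewrite -(subnKC i_lek) lie_p_tail => [|j i_lt_j]; last first.
    by rewrite gtn_eqF // spike_tail //; lia.
  rewrite proj12_iter_comm_idem /= eqxx spike_tail //.
  rewrite (lie_p_ext (t' := spike q r)) => [|j j_le_i]; last by rewrite ltn_eqF.
  rewrite lie_p_spike // commMzl raddfMz -mulrzA -exprD -signr_odd.
  have -> : odd (i - q + (k - i.+1)) by lia.
  by rewrite expr1 mulrN1z.
- rewrite -(proj12_eigen12 Dr12) -(lie_p_spike_even Dr12).
  by congr proj12; apply: lie_p_ext => j _; rewrite /spike; case: eqP.
Qed.

End LieTerms.

Lemma lie_derivation_proj12_comm n D r : (2 <= n)%N ->
  torsion_free R (n%:Z - 1) -> lie_n_derivation A n D ->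
  eigen r 1 0 -> eigen (D r) 1 0 -> proj12 (comm A r (D e)) = 0.
Proof.
move=> n_ge2 tf_n1 Dlie r12 Dr12.
have q_lt_n : (~~ odd n < n)%N by lia.
have spike_ok : [/\ (~~ odd n <= 1)%N, (~~ odd n <= n.-1)%N & ~~ odd (n.-1 - ~~ odd n)].
  by split; lia.
case: spike_ok => q_le1 q_lek even_kq.
(* Placing r at position 0 or 1 according to the parity of n makes
   p_n(spike) equal to r itself. *)
have := Dlie (spike (~~ odd n) r).
rewrite lie_p_spike_even // => /(congr1 proj12).
rewrite (proj12_eigen12 Dr12) raddf_sum (bigD1 (Ordinal q_lt_n)) //=.
rewrite proj12_lie_term // eqxx.
rewrite (eq_bigr (fun=> - proj12 (comm A r (D e)))); last first.
  by move=> i i_ne_q; rewrite proj12_lie_term ?ifN //; have := ltn_ord i; lia.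
rewrite sumr_const cardC1 card_ord -[LHS]addr0 => /addrI /esym /eqP.
rewrite mulNrn oppr_eq0 => /eqP p_n1.
apply: tf_n1; first by lia.
by rewrite -predn_int ?(ltnW n_ge2) // -pmulrn.
Qed.

Lemma lie_derivation_commute12 n D r : (2 <= n)%N ->
  torsion_free R (n%:Z - 1) -> lie_n_derivation A n D ->
  eigen r 1 0 -> eigen (D r) 1 0 ->
  m r (m (m f (D e)) f) = m (m (m e (D e)) e) r.
Proof.
move=> n_ge2 tf_n1 Dlie r12 Dr12; apply/eqP; rewrite -subr_eq0 -proj12_comm12 //.
by rewrite (lie_derivation_proj12_comm n_ge2 tf_n1 Dlie).
Qed.

Lemma peirce11_eq_central d z : torsion_free R 3 -> central A z ->
  (forall x, peirce A e e x -> (forall r, peirce A e f r -> m x r = 0) -> x = 0) ->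
  (forall r, eigen r 1 0 -> m r (m z f) = m (m (m e d) e) r) ->
  m (m e d) e = m z e.
Proof.
move=> tf3 z_central faithful11 commute.
have zC := central_mulC z_central; have zAl := central_mulAl tf3 z_central.
have eze : m (m e z) e = m z e by rewrite -zC zAl e_idem.
apply/eqP; rewrite -subr_eq0 -eze -amulBl -amulBr; apply/eqP.
apply: faithful11 => [|_ [s ->]]; first by exists (d - z).
have r12 := eigen12 s; set r := m (m e s) f in r12 *.
have [er re] := r12; rewrite mulr1z in er.
have r_f : m r f = r by rewrite amulBr amul1r re mulr0z subr0.
rewrite amulBr !amulBl eze -commute // -(central_mulAm tf3 z_central) -zC.
by rewrite !zAl r_f er subrr.
Qed.

Lemma f_yz_offdiag a b : eigen a 1 0 -> eigen b 0 1 -> f_yz A (a + b) e e = a + b.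
Proof.
move=> [ea ae] [eb be].
rewrite /f_yz /op_comm /Lop /Rop e_idem !amulDl !amulDr ea ae eb be !mulr1z !mulr0z.
rewrite amul0l amul0r eb be !addr0 ae !mulr0z mulr1z !(add0r, subr0, subrr).
by rewrite addr0 addrC.
Qed.

Lemma sub_offdiag_eq_central d z : m (m e d) e = m z e -> m (m f d) f = m z f ->
  d - (m (m e d) f + m (m f d) e) = z.
Proof.
move=> d11 d22; rewrite {1}(peirce_decomp d) d11 d22.
by rewrite [m (m f d) e + _]addrC addrACA addrK -amulDr subrKC amul1r.
Qed.

End Peirce.
End AlternativeRing.

Theorem lemma3p5 (R : zmodType) (A : alt_ring R) (n : nat) (e1 : R)
  (D : R -> R) :
  (2 <= n)%N ->
  torsion_free R 2 -> torsion_free R 3 ->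
  torsion_free R (n%:Z - 1) -> torsion_free R (n%:Z - 3) ->
  (* e1 is a nontrivial idempotent *)
  amul A e1 e1 = e1 -> e1 != 0 -> e1 != aone A ->
  let e2 := aone A - e1 in
  let P := peirce A in
  (* (1) *)
  (forall x, P e1 e2 x -> (forall r, P e2 e1 r -> amul A x r = 0) -> x = 0) ->
  (forall x, P e2 e1 x -> (forall r, P e1 e2 r -> amul A x r = 0) -> x = 0) ->
  (* (2) *)
  (forall x, P e1 e1 x ->
     (forall r, P e1 e2 r -> amul A x r = 0) \/
     (forall r, P e2 e1 r -> amul A r x = 0) -> x = 0) ->
  (* (3) *)
  (forall x, P e2 e2 x ->
     (forall r, P e1 e2 r -> amul A r x = 0) \/
     (forall r, P e2 e1 r -> amul A x r = 0) -> x = 0) ->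
  (* (4) *)
  (forall z, central A z -> z != 0 -> forall r, exists s, r = amul A z s) ->
  lie_n_derivation A n D ->
  (* (a) *)
  (forall x, P e1 e1 x -> in_Ze A e2 (amul A (amul A e2 (D x)) e2)) ->
  (* (b) *)
  (forall x, P e2 e2 x -> in_Ze A e1 (amul A (amul A e1 (D x)) e1)) ->
  (* (c) *)
  (forall x, P e1 e2 x -> P e1 e2 (D x)) ->
  (forall x, P e2 e1 x -> P e2 e1 (D x)) ->
  let y := amul A (amul A e1 (D e1)) e2 + amul A (amul A e2 (D e1)) e1 in
  central A (D e1 - f_yz A y e1 e1).
Proof.
move=> n_ge2 _ tf3 tf_n1 _ e1_idem _ _ e2 P _ _ faithful11 _ _ Dlie corner22 _ D12 _ y.
have [z [z_central d22]] : in_Ze A e2 (amul A (amul A e2 (D e1)) e2).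
  by apply: corner22; exists e1; rewrite !e1_idem.
have commute r : eigen A e1 r 1 0 ->
    amul A r (amul A z e2) = amul A (amul A (amul A e1 (D e1)) e1) r.
  move=> r12; rewrite -d22; apply: (lie_derivation_commute12 e1_idem n_ge2 tf_n1 Dlie r12).
  by have [s ->] := D12 r (eigen12_peirce r12); apply: eigen12.
have d11 := peirce11_eq_central e1_idem tf3 z_central
  (fun x Px x_ann => faithful11 x Px (or_introl x_ann)) commute.
have fy : f_yz A y e1 e1 = y.
  by rewrite /y /e2 f_yz_offdiag //; [apply: eigen12 | apply: eigen21].
by rewrite fy /y /e2 (sub_offdiag_eq_central d11 d22).
Qed.
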